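(* Let $\{C_\lambda\}$ be a combined rating rule satisfying (A1), (A2) and (A3). Then for every $n\ge1$, every $\lambda\in(0,\infty)^n$, every $R\in\mathbb{R}^n$ and every $\alpha>0$, $C_{\alpha\lambda}(R)=C_\lambda(R)$.
   Context: A combined rating rule assigns to every $n\ge1$ and every positive weight vector $\lambda=(\lambda_1,\dots,\lambda_n)\in(0,\infty)^n$ a function $C_\lambda:\mathbb{R}^n\to\mathbb{R}$. Write $\bar\lambda_B=\sum_{i\in B}\lambda_i$, $R_B=(R_i)_{i\in B}$, $\lambda_B=(\lambda_i)_{i\in B}$ for nonempty $B\subseteq\{1,\dots,n\}$ (inherited increasing order); $\mathbf 1$ is the all-ones vector. (A1) Same-scale normalization: $C_\lambda(r\mathbf 1)=r$ for all $\lambda$ and all $r\in\mathbb{R}$. (A2) Regularity and monotonicity: for each $n$, $(\lambda,R)\mapsto C_\lambda(R)$ is continuous on $(0,\infty)^n\times\mathbb{R}^n$; for each fixed $\lambda$, $C_\lambda$ is continuously differentiable with $\partial_i C_\lambda(R)>0$ for all $i$ and all $R$. (A3) Recursive consistency: for every ordered partition $(B_1,\dots,B_m)$ of $\{1,\dots,n\}$ into nonempty blocks, $C_\lambda(R)=C_{(\bar\lambda_{B_1},\dots,\bar\lambda_{B_m})}\big(C_{\lambda_{B_1}}(R_{B_1}),\dots,C_{\lambda_{B_m}}(R_{B_m})\big)$. *)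

From HB Require Import structures.
From mathcomp Require Import all_boot all_order all_algebra.
From mathcomp Require Import all_classical all_reals all_analysis.
Set Implicit Arguments. Unset Strict Implicit. Unset Printing Implicit Defensive.
Import Order.TTheory GRing.Theory Num.Theory.
Import numFieldNormedType.Exports.
Local Open Scope ring_scope.

Section Defs.
Variable R : realType.

(* A combined rating rule: for each n and weight vector lam, a function
   C n lam : R^n -> R.  Values of C at non-positive weights are irrelevant. *)
Definition rating_rule := forall n : nat, 'rV[R]_n -> 'rV[R]_n -> R.

Definition posvec n (lam : 'rV[R]_n) : Prop := forall i, 0 < lam 0 i.

Definition constvec n (r : R) : 'rV[R]_n := const_mx r.

(* sub-vector x_B, with the inherited increasing order of B *)
Definition subvec n (B : {set 'I_n}) (x : 'rV[R]_n) : 'rV[R]_#|B| :=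
  \row_(j < #|B|) x 0 (enum_val j).

Definition block n m (f : 'I_n -> 'I_m) (k : 'I_m) : {set 'I_n} :=
  [set i | f i == k].

Definition A1 (C : rating_rule) : Prop :=
  forall n (lam : 'rV[R]_n) (r : R), (0 < n)%N -> posvec lam ->
    C n lam (constvec n r) = r.

Definition A2 (C : rating_rule) : Prop :=
  forall n, (0 < n)%N ->
  (forall (lam x : 'rV[R]_n), posvec lam ->
     {for (lam, x), continuous (fun p : 'rV[R]_n * 'rV[R]_n => C n p.1 p.2)}) /\
  (forall lam : 'rV[R]_n, posvec lam ->
     (forall x, differentiable (C n lam) x) /\
     (forall i : 'I_n, continuous (fun x => 'D_(delta_mx 0 i) (C n lam) x)) /\
     (forall (i : 'I_n) x, 0 < 'D_(delta_mx 0 i) (C n lam) x)).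

(* (A3): an ordered partition (B_1,...,B_m) of {1..n} into nonempty blocks
   is encoded by a surjection f : 'I_n -> 'I_m, B_k = f^{-1}(k). *)
Definition A3 (C : rating_rule) : Prop :=
  forall n m (f : 'I_n -> 'I_m), (0 < n)%N -> (forall k, exists i, f i = k) ->
  forall (lam x : 'rV[R]_n), posvec lam ->
    C n lam x =
    C m (\row_k \sum_(i in block f k) lam 0 i)
        (\row_k C #|block f k| (subvec (block f k) lam) (subvec (block f k) x)).

End Defs.

From HB Require Import structures.
From mathcomp Require Import all_boot all_order all_algebra.
From mathcomp Require Import all_classical all_reals all_analysis.
From mathcomp Require Import zify lra.
Import Order.TTheory GRing.Theory Num.Theory.
Import numFieldNormedType.Exports.
Local Open Scope ring_scope.

(* Fix the scores x.  Apply (A3) to the weights (mu, nu) on the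
   duplicated scores (x, x) in two ways.  Partitioning into the two halves
   gives C_2 applied to the pair (C mu x, C nu x); partitioning into the
   pairs {i, n + i} gives C (mu + nu) x, since every pair carries a constant
   score and (A1) applies.  Hence if C mu x = C nu x = c then, by (A1) again,
   C (mu + nu) x = c: the weights giving the value C lam x are closed under
   sums, so under positive integer and then positive rational scalings of
   lam.  Continuity in the weights (A2) extends this to real scalings. *)

Lemma enum_val_filter_iota {n} {B : {set 'I_n}} (P : pred nat) :
  (forall i, (i \in B) = P (val i)) ->
  #|B| = size (seq.filter P (iota 0 n)) /\
  forall j : 'I_#|B|, val (enum_val j) = nth 0%N (seq.filter P (iota 0 n)) j.
Proof.
move=> memB.
have enumB : map val (enum B) = seq.filter P (iota 0 n).
  rewrite -val_enum_ord filter_map [in RHS]enumT /enum_mem.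
  by congr map; apply: seq.eq_filter => i /=; rewrite memB.
split; first by rewrite cardE -enumB size_map.
move=> j; rewrite (enum_val_nth (enum_val j)) -enumB (nth_map (enum_val j)) //.
by rewrite -cardE.
Qed.

Lemma filter_iota_half n (b : bool) :
  seq.filter (fun k => (k < n)%N == b) (iota 0 (n + n)) =
  if b then iota 0 n else iota n n.
Proof.
rewrite iotaD filter_cat add0n.
have lo k : k \in iota 0 n -> (k < n)%N by rewrite mem_iota => /andP[].
have hi k : k \in iota n n -> ~~ (k < n)%N by rewrite mem_iota -leqNgt => /andP[].
case: b.
- rewrite (@eq_in_filter _ _ predT (iota 0 n)); last by move=> k /lo ->.
  rewrite (@eq_in_filter _ _ pred0 (iota n n)); last by move=> k /hi /negbTE ->.
  by rewrite filter_predT filter_pred0 cats0.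
- rewrite (@eq_in_filter _ _ pred0 (iota 0 n)); last by move=> k /lo ->.
  rewrite (@eq_in_filter _ _ predT (iota n n)); last by move=> k /hi /negbTE ->.
  by rewrite filter_predT filter_pred0.
Qed.

Lemma gtz0_intr_natS (R : numDomainType) (z : int) :
  0 < z -> exists k, z%:~R = k.+1%:R :> R.
Proof.
move=> z_gt0; exists `|z|.-1; rewrite prednK ?absz_gt0 ?gt_eqF //.
by rewrite -[z]gtz0_abs // pmulrn.
Qed.

Lemma cvg_eq_pos_rat (R : realType) (g : R -> R) (a c : R) :
  0 < a -> (g t @[t --> a] --> g a)%classic ->
  (forall r : rat, 0 < r -> g (ratr r) = c) -> g a = c.
Proof.
move=> a_gt0 ga gc; apply/eqP; apply: contraT => gaNc.
have dist_gt0 : 0 < `|g a - c| by rewrite normr_gt0 subr_eq0.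
move/cvgrPdist_lt: ga => /(_ _ dist_gt0) /nbhs_normP [d /= d_gt0 near_a].
have e_gt0 : 0 < Num.min d a by rewrite lt_min d_gt0 a_gt0.
have [r] : exists r : rat, ratr r \in `]a - Num.min d a, a[.
  by apply: rat_in_itvoo; rewrite ltrBlDr ltrDl.
rewrite in_itv /= => /andP[r_gt r_lt].
have min_le_d : Num.min d a <= d by rewrite ge_min lexx.
have min_le_a : Num.min d a <= a by rewrite ge_min lexx orbT.
have r_gt0 : 0 < r by rewrite -(ltr_rat R) rmorph0; lra.
have : `|a - ratr r| < d by rewrite ger0_norm; lra.
by move=> /near_a /=; rewrite gc // ltxx.
Qed.

Section RatingRule.
Variables (R : realType) (C : rating_rule R).

Lemma posvecZ {n} {lam : 'rV[R]_n} {a : R} :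
  0 < a -> posvec lam -> posvec (a *: lam).
Proof. by move=> a_gt0 lam_gt0 i; rewrite mxE mulr_gt0. Qed.

Lemma posvec_row_mx {n} {mu nu : 'rV[R]_n} :
  posvec mu -> posvec nu -> posvec (row_mx mu nu).
Proof.
move=> mu_gt0 nu_gt0 i; rewrite -(fintype.splitK i).
by case: (fintype.split i) => j /=; rewrite ?row_mxEl ?row_mxEr.
Qed.

Lemma posvec_block_sums n m (f : 'I_n -> 'I_m) (lam : 'rV[R]_n) :
  (forall k, exists i, f i = k) -> posvec lam ->
  posvec (\row_k \sum_(i in block f k) lam 0 i).
Proof.
move=> f_onto lam_gt0 k; rewrite mxE; have [i fi] := f_onto k.
rewrite (bigD1 i) /=; last by rewrite /block inE fi.
by apply: ltr_pwDl; [exact: lam_gt0 | apply: sumr_ge0 => j _; apply/ltW].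
Qed.

Lemma rating_cast {m p} (e : m = p) (u v : 'rV[R]_m) (u' v' : 'rV[R]_p) :
  (forall i, u' 0 i = u 0 (cast_ord (esym e) i)) ->
  (forall i, v' 0 i = v 0 (cast_ord (esym e) i)) ->
  C m u v = C p u' v'.
Proof.
case: p / e u' v' => u' v' uu' vv'.
have -> : u' = u by apply/matrixP => i j; rewrite ord1 uu' cast_ord_id.
by have -> : v' = v by apply/matrixP => i j; rewrite ord1 vv' cast_ord_id.
Qed.

Lemma rating_subvec_half {n} (mu nu x : 'rV[R]_n) {B : {set 'I_(n + n)}} {b : bool} :
  (forall i, (i \in B) = ((val i < n)%N == b)) ->
  C #|B| (subvec B (row_mx mu nu)) (subvec B (row_mx x x)) =
  C n (if b then mu else nu) x.
Proof.
move=> memB; have [cardB enumB] := enum_val_filter_iota (fun k => (k < n)%N == b) memB.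
rewrite filter_iota_half in cardB enumB.
have e : n = #|B| by rewrite cardB; case: (b); rewrite size_iota.
have enumE (j : 'I_#|B|) : enum_val j =
    if b then lshift n (cast_ord (esym e) j) else rshift n (cast_ord (esym e) j).
  have jn : (j < n)%N by apply: leq_trans (ltn_ord j) _; rewrite -e.
  by case: b enumB {cardB memB} => enumB; apply: val_inj; rewrite /= enumB nth_iota.
symmetry; apply: (rating_cast e) => i; rewrite mxE enumE.
all: by case: b {enumE memB cardB enumB}; rewrite ?row_mxEl ?row_mxEr.
Qed.

Lemma rating_cvg_scale (C_A2 : A2 C) n (lam x : 'rV[R]_n) (a : R) :
  (0 < n)%N -> posvec lam -> 0 < a ->
  (C n (t *: lam) x @[t --> a] --> C n (a *: lam) x)%classic.
Proof.
move=> n_gt0 lam_gt0 a_gt0.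
have C_cont := (C_A2 n n_gt0).1 (a *: lam) x (posvecZ a_gt0 lam_gt0).
have scale_cvg : ((t *: lam, x) @[t --> a] --> (a *: lam, x))%classic.
  exact: cvg_pair (cvgZr_tmp cvg_id) (cvg_cst x).
exact: cvg_comp scale_cvg C_cont.
Qed.

Hypotheses (C_A1 : A1 C) (C_A3 : A3 C).

Lemma rating_halves n (mu nu x : 'rV[R]_n) c :
  (0 < n)%N -> posvec mu -> posvec nu -> C n mu x = c -> C n nu x = c ->
  C (n + n) (row_mx mu nu) (row_mx x x) = c.
Proof.
move=> n_gt0 mu_gt0 nu_gt0 Cmu Cnu.
have w_gt0 := posvec_row_mx mu_gt0 nu_gt0.
pose f (i : 'I_(n + n)) : 'I_2 := if (val i < n)%N then ord0 else ord_max.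
have f_onto k : exists i, f i = k.
  case: k => [[|[|k]] k_lt] //.
    by exists (lshift n (Ordinal n_gt0)); apply: val_inj; rewrite /f /= n_gt0.
  by exists (rshift n (Ordinal n_gt0)); apply: val_inj; rewrite /f /= ltnNge leq_addr.
have blockE k : block f k =i [pred i : 'I_(n + n) | (val i < n)%N == (k == ord0)].
  by case: k => [[|[|k]] k_lt] // i; rewrite /block !inE /f; case: ifP.
rewrite (C_A3 _ _ f _ f_onto _ _ w_gt0) ?addn_gt0 ?n_gt0 //.
have -> : \row_k C #|block f k| (subvec (block f k) (row_mx mu nu))
                                 (subvec (block f k) (row_mx x x)) = constvec 2 c.
  apply/matrixP => i k; rewrite !mxE (rating_subvec_half mu nu x (blockE k)).
  by case: k {blockE} => [[|[|k]] k_lt].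
by rewrite C_A1 //; apply: posvec_block_sums.
Qed.

Lemma rating_pairs n (mu nu x : 'rV[R]_n) :
  (0 < n)%N -> posvec mu -> posvec nu ->
  C (n + n) (row_mx mu nu) (row_mx x x) = C n (mu + nu) x.
Proof.
move=> n_gt0 mu_gt0 nu_gt0.
have w_gt0 := posvec_row_mx mu_gt0 nu_gt0.
pose f (i : 'I_(n + n)) : 'I_n := match fintype.split i with inl k => k | inr k => k end.
have f_lshift k : f (lshift n k) = k by rewrite /f -/(unsplit (inl k)) fintype.unsplitK.
have f_rshift k : f (rshift n k) = k by rewrite /f -/(unsplit (inr k)) fintype.unsplitK.
have f_onto k : exists i, f i = k by exists (lshift n k).
have xE i : row_mx x x 0 i = x 0 (f i).
  rewrite -(fintype.splitK i); case: (fintype.split i) => j /=.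
    by rewrite row_mxEl f_lshift.
  by rewrite row_mxEr f_rshift.
have blockE k : block f k = [set lshift n k; rshift n k].
  apply/setP => i; rewrite /block !inE -(fintype.splitK i).
  case: (fintype.split i) => j /=; rewrite ?f_lshift ?f_rshift.
    have -> : (lshift n j == rshift n k) = false.
      by apply/negbTE/eqP => /(congr1 val) /=; have := ltn_ord j; lia.
    by rewrite (eqtype.inj_eq (@lshift_inj _ _)) orbF.
  have -> : (rshift n j == lshift n k) = false.
    by apply/negbTE/eqP => /(congr1 val) /=; have := ltn_ord k; lia.
  by rewrite (eqtype.inj_eq (@rshift_inj _ _)).
rewrite (C_A3 _ _ f _ f_onto _ _ w_gt0) ?addn_gt0 ?n_gt0 //.
congr (C n _ _); apply/matrixP => i k; rewrite ord1 !mxE.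
- rewrite blockE big_setU1 /= ?big_set1 ?row_mxEl ?row_mxEr // inE.
  by apply/eqP => /(congr1 val) /=; have := ltn_ord k; lia.
- have -> : subvec (block f k) (row_mx x x) = constvec _ (x 0 k).
    apply/matrixP => i' j; rewrite ord1 [LHS]mxE [RHS]mxE xE.
    by have := enum_valP j; rewrite /block inE => /eqP ->.
  apply: C_A1; last by move=> j; rewrite mxE.
  by apply/card_gt0P; exists (lshift n k); rewrite /block inE f_lshift.
Qed.

Lemma rating_weightD n (mu nu x : 'rV[R]_n) c :
  (0 < n)%N -> posvec mu -> posvec nu ->
  C n mu x = c -> C n nu x = c -> C n (mu + nu) x = c.
Proof.
move=> n_gt0 mu_gt0 nu_gt0 Cmu Cnu.
by rewrite -rating_pairs //; apply: rating_halves.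
Qed.

Lemma rating_scale_nat n (lam x : 'rV[R]_n) k :
  (0 < n)%N -> posvec lam -> C n (k.+1%:R *: lam) x = C n lam x.
Proof.
move=> n_gt0 lam_gt0; elim: k => [|k IH]; first by rewrite scale1r.
rewrite -[k.+2]addn1 natrD scalerDl scale1r.
by apply: rating_weightD => //; apply: posvecZ.
Qed.

Lemma rating_scale_pos_rat n (lam x : 'rV[R]_n) (r : rat) :
  (0 < n)%N -> posvec lam -> 0 < r -> C n (ratr r *: lam) x = C n lam x.
Proof.
move=> n_gt0 lam_gt0 r_gt0.
have num_gt0 : 0 < numq r by rewrite numq_gt0.
have [p num_r] := @gtz0_intr_natS R _ num_gt0.
have [q den_r] := @gtz0_intr_natS R _ (denq_gt0 r).
pose lam' := q.+1%:R^-1 *: lam.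
have lam'_gt0 : posvec lam' by apply: posvecZ; rewrite // invr_gt0.
have lamE : lam = q.+1%:R *: lam' by rewrite scalerA mulfV ?scale1r.
rewrite /ratr num_r den_r -scalerA rating_scale_nat //.
by rewrite [in RHS]lamE rating_scale_nat.
Qed.

End RatingRule.

Theorem lemma2 (R : realType) (C : rating_rule R) :
  A1 C -> A2 C -> A3 C ->
  forall (n : nat) (lam x : 'rV[R]_n) (alpha : R),
    (0 < n)%N -> posvec lam -> 0 < alpha ->
    C n (alpha *: lam) x = C n lam x.
Proof.
move=> C_A1 C_A2 C_A3 n lam x alpha n_gt0 lam_gt0 alpha_gt0.
apply: (@cvg_eq_pos_rat R (fun t => C n (t *: lam) x)) => //.
- exact: rating_cvg_scale.
- by move=> r r_gt0; apply: rating_scale_pos_rat.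
Qed.
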